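(* Let $A:\mathbb{R}^d\rightrightarrows\mathbb{R}^d$ be maximal monotone with $A^{-1}(0)\neq\emptyset$, let $p\geq1$ be an integer, $\sigma\in(0,1)$, $\theta>0$, $x_0\in\mathbb{R}^d\setminus A^{-1}(0)$, and suppose $\lambda_k>0$, $y_k,v_k,x_k\in\mathbb{R}^d$, $\epsilon_k\geq0$ satisfy for every $k\geq0$: $v_{k+1}\in A^{\epsilon_{k+1}}(y_{k+1})$, $\|\lambda_{k+1}v_{k+1}+y_{k+1}-x_k\|^2+2\lambda_{k+1}\epsilon_{k+1}\leq\sigma^2\|y_{k+1}-x_k\|^2$, $\lambda_{k+1}\|y_{k+1}-x_k\|^{p-1}\geq\theta$, and $x_{k+1}=x_k-\lambda_{k+1}v_{k+1}$. Then for every integer $k\geq1$, \[ \sum_{i=1}^k\lambda_i\geq\theta\left(\frac{1-\sigma^2}{\inf_{z^\star\in A^{-1}(0)}\|x_0-z^\star\|^2}\right)^{\frac{p-1}{2}}k^{\frac{p+1}{2}}. \]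
   Context: The $\epsilon$-enlargement is $A^{\epsilon}(x)=\{v\in\mathbb{R}^d:\langle x-\tilde x,v-\tilde v\rangle\geq-\epsilon\ \forall\tilde x\in\mathbb{R}^d,\ \forall\tilde v\in A\tilde x\}$. *)

From HB Require Import structures.
From mathcomp Require Import all_boot all_order all_algebra.
From mathcomp Require Import all_classical all_reals all_analysis.
Set Implicit Arguments. Unset Strict Implicit. Unset Printing Implicit Defensive.
Import Order.TTheory GRing.Theory Num.Theory.
Local Open Scope classical_set_scope.
Local Open Scope ring_scope.

Definition dotv (R : realType) (d : nat) (u v : 'rV[R]_d) : R :=
  \sum_(i < d) u 0 i * v 0 i.
Definition nrm (R : realType) (d : nat) (u : 'rV[R]_d) : R :=
  Num.sqrt (dotv u u).

Definition monotone_op (R : realType) (d : nat) (A : 'rV[R]_d -> set 'rV[R]_d) :=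
  forall x y u v, A x u -> A y v -> 0 <= dotv (x - y) (u - v).

Definition maximal_monotone (R : realType) (d : nat) (A : 'rV[R]_d -> set 'rV[R]_d) :=
  monotone_op A /\
  forall B : 'rV[R]_d -> set 'rV[R]_d,
    monotone_op B -> (forall x, A x `<=` B x) -> forall x, B x = A x.

Definition enlarg (R : realType) (d : nat) (A : 'rV[R]_d -> set 'rV[R]_d)
  (eps : R) (x : 'rV[R]_d) : set 'rV[R]_d :=
  [set v | forall xt vt, A xt vt -> - eps <= dotv (x - xt) (v - vt)].

Definition zeros (R : realType) (d : nat) (A : 'rV[R]_d -> set 'rV[R]_d) : set 'rV[R]_d :=
  [set z | A z 0].

(* Each step is a relative-error inexact proximal step, so for every zero z of A
   the squared distance ||x_k - z||^2 drops by at least (1 - sigma^2) a_{k+1}^2,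
   where a_{k+1} = ||y_{k+1} - x_k||; summing, (1 - sigma^2) sum_{i<=k} a_i^2 is
   bounded by the infimum D of ||x_0 - z||^2.  The large-step condition gives
   lambda_i >= theta / a_i^(p-1), and the tangent-line form of AM-GM,
   (n+2) s^n <= 2 + n s^(n+2) applied to s = c a_i with c^2 = (1 - sigma^2) k / D,
   turns the bound on sum a_i^2 into sum a_i^-(p-1) >= k c^(p-1). *)
From HB Require Import structures.
From mathcomp Require Import all_boot all_order all_algebra.
From mathcomp Require Import all_classical all_reals all_analysis.
From mathcomp Require Import ring lra.
Import Order.TTheory GRing.Theory Num.Theory.
Local Open Scope classical_set_scope.
Local Open Scope ring_scope.

Section InnerProduct.
Context {R : realType} {d : nat}.
Implicit Types u w z : 'rV[R]_d.

Lemma dotvC u w : dotv u w = dotv w u.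
Proof. by apply: eq_bigr => i _; rewrite mulrC. Qed.

Lemma dotvDl u w z : dotv (u + w) z = dotv u z + dotv w z.
Proof. by rewrite /dotv -big_split; apply: eq_bigr => i _; rewrite !mxE mulrDl. Qed.

Lemma dotvZl a u w : dotv (a *: u) w = a * dotv u w.
Proof. by rewrite /dotv mulr_sumr; apply: eq_bigr => i _; rewrite !mxE mulrA. Qed.

Lemma dotvNl u w : dotv (- u) w = - dotv u w.
Proof. by rewrite -scaleN1r dotvZl mulN1r. Qed.

Lemma dotvBl u w z : dotv (u - w) z = dotv u z - dotv w z.
Proof. by rewrite dotvDl dotvNl. Qed.

Lemma dotvDr u w z : dotv z (u + w) = dotv z u + dotv z w.
Proof. by rewrite dotvC dotvDl !(dotvC z). Qed.

Lemma dotvBr u w z : dotv z (u - w) = dotv z u - dotv z w.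
Proof. by rewrite dotvC dotvBl !(dotvC z). Qed.

Lemma dotvZr a u w : dotv w (a *: u) = a * dotv w u.
Proof. by rewrite dotvC dotvZl dotvC. Qed.

Lemma dotvNr u w : dotv w (- u) = - dotv w u.
Proof. by rewrite dotvC dotvNl dotvC. Qed.

Lemma dotvv_ge0 u : 0 <= dotv u u.
Proof. by apply: sumr_ge0 => i _; rewrite -expr2 sqr_ge0. Qed.

Lemma nrm_sqr u : nrm u ^+ 2 = dotv u u.
Proof. by rewrite /nrm sqr_sqrtr // dotvv_ge0. Qed.

End InnerProduct.

Lemma enlarg_zero_descent {R : realType} {d : nat} {A : 'rV[R]_d -> set 'rV[R]_d}
    {eps lam s : R} {xk y v z : 'rV[R]_d} :
  0 <= lam -> enlarg A eps y v -> zeros A z ->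
  nrm (lam *: v + y - xk) ^+ 2 + 2 * lam * eps <= s * nrm (y - xk) ^+ 2 ->
  nrm (xk - lam *: v - z) ^+ 2 <= nrm (xk - z) ^+ 2 - (1 - s) * nrm (y - xk) ^+ 2.
Proof.
move=> lam_ge0 vAy /(vAy z 0) {vAy}; rewrite subr0 !nrm_sqr.
have -> : y - z = (y - xk) + (xk - z) by rewrite addrA subrK.
have -> : lam *: v + y - xk = lam *: v + (y - xk) by rewrite addrA.
have -> : xk - lam *: v - z = (xk - z) - lam *: v by rewrite addrAC.
move: (y - xk) (xk - z) => P Q.
rewrite !(dotvDl, dotvBl, dotvDr, dotvBr, dotvNl, dotvNr, dotvZl, dotvZr).
rewrite (dotvC P v) (dotvC Q v) => monoPQ err.
have two_lam_ge0 : 0 <= 2 * lam by lra.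
have := ler_wpM2l two_lam_ge0 monoPQ; lra.
Qed.

Section InexactProximalPoint.
Variables (R : realType) (d : nat) (A : 'rV[R]_d -> set 'rV[R]_d) (sigma : R).
Variables (lambda eps : nat -> R) (y v x : nat -> 'rV[R]_d).
Hypothesis lambda_ge0 : forall k, 0 <= lambda k.+1.
Hypothesis v_enlarg : forall k, enlarg A (eps k.+1) (y k.+1) (v k.+1).
Hypothesis rel_error : forall k,
  nrm (lambda k.+1 *: v k.+1 + y k.+1 - x k) ^+ 2 + 2 * lambda k.+1 * eps k.+1
    <= sigma ^+ 2 * nrm (y k.+1 - x k) ^+ 2.
Hypothesis x_step : forall k, x k.+1 = x k - lambda k.+1 *: v k.+1.

Lemma sum_step_sqr_le_dist z k : zeros A z ->
  (1 - sigma ^+ 2) * \sum_(i < k) nrm (y i.+1 - x i) ^+ 2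
    <= nrm (x 0%N - z) ^+ 2 - nrm (x k - z) ^+ 2.
Proof.
move=> Az; elim: k => [|k IH]; first by rewrite big_ord0 mulr0 subrr.
rewrite big_ord_recr /= mulrDr x_step.
have := enlarg_zero_descent (lambda_ge0 k) (v_enlarg k) Az (rel_error k).
lra.
Qed.

Lemma sum_step_sqr_le_inf k : zeros A !=set0 ->
  (1 - sigma ^+ 2) * \sum_(i < k) nrm (y i.+1 - x i) ^+ 2
    <= inf [set nrm (x 0%N - z) ^+ 2 | z in zeros A].
Proof.
move=> [z0 Az0]; apply: lb_le_inf; first by exists (nrm (x 0%N - z0) ^+ 2), z0.
move=> _ [z Az <-]; have := sum_step_sqr_le_dist z k Az.
have := sqr_ge0 (nrm (x k - z)); lra.
Qed.

End InexactProximalPoint.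

Lemma amgm_exprn {R : realType} (n : nat) (s : R) : 0 <= s ->
  n.+2%:R * s ^+ n <= 2 + n%:R * s ^+ n.+2.
Proof.
move=> s_ge0; elim: n => [|n IH]; first by rewrite !expr0 mul0r addr0 mulr1.
have sn_ge0 : 0 <= s ^+ n.+1 by rewrite exprn_ge0.
have key : 0 <= (1 - s) * (2 - s ^+ n.+1 * (1 + s)).
  have [s_le1|s_gt1] := lerP s 1.
    have sn_le1 : s ^+ n.+1 <= 1 by rewrite exprn_ile1.
    by apply: mulr_ge0; nra.
  have sn_ge1 : 1 <= s ^+ n.+1 by rewrite exprn_ege1 // ltW.
  by apply: mulr_le0; nra.
have := ler_wpM2l s_ge0 IH; move: key.
rewrite !exprS -!natr1; nra.
Qed.

Lemma tangent_lb_mul_exprn {R : realType} (n : nat) (theta lam a c : R) :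
  0 < theta -> 0 <= a -> 0 <= c -> theta <= lam * a ^+ n ->
  theta * (n.+2%:R * c ^+ n - n%:R * c ^+ n.+2 * a ^+ 2) <= 2 * lam.
Proof.
move=> theta_gt0 a_ge0 c_ge0 theta_le.
have an_ge0 : 0 <= a ^+ n by rewrite exprn_ge0.
have lam_ge0 : 0 <= lam.
  by rewrite leNgt; apply/negP => lam_lt0; have := mulr_le0_ge0 (ltW lam_lt0) an_ge0; lra.
set B := n.+2%:R * c ^+ n - n%:R * c ^+ n.+2 * a ^+ 2.
have aB_le2 : a ^+ n * B <= 2.
  have := amgm_exprn n (c * a) (mulr_ge0 c_ge0 a_ge0).
  by rewrite /B !exprMn !exprS; lra.
have [B_ge0|B_lt0] := lerP 0 B; last by nra.
by have := ler_wpM2r B_ge0 theta_le; nra.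
Qed.

Lemma sum_ge_of_sum_sqr_le {R : realType} (k n : nat) (theta r : R)
    (lam a : nat -> R) :
  0 < theta -> 0 <= r -> (forall i, 0 <= a i) ->
  (forall i, theta <= lam i * a i ^+ n) ->
  r * \sum_(i < k) a i ^+ 2 <= 1 ->
  theta * (k%:R * Num.sqrt (r * k%:R) ^+ n) <= \sum_(i < k) lam i.
Proof.
move=> theta_gt0 r_ge0 a_ge0 theta_le sum_le.
set c := Num.sqrt (r * k%:R).
have c_ge0 : 0 <= c := sqrtr_ge0 _.
have c2 : c ^+ 2 = r * k%:R by rewrite sqr_sqrtr // mulr_ge0.
have cn_ge0 : 0 <= c ^+ n by rewrite exprn_ge0.
have tangent_sum :
    \sum_(i < k) theta * (n.+2%:R * c ^+ n - n%:R * c ^+ n.+2 * a i ^+ 2)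
      <= \sum_(i < k) 2 * lam i.
  by apply: ler_sum => i _; apply: tangent_lb_mul_exprn.
rewrite -!mulr_sumr sumrB sumr_const card_ord -mulr_sumr in tangent_sum.
rewrite -addn2 exprD c2 -[_ *+ k]mulr_natr natrD in tangent_sum.
have := ler_wpM2l (mulr_ge0 (ler0n _ n) (mulr_ge0 cn_ge0 (ler0n _ k))) sum_le.
nra.
Qed.

Lemma powR_half_exponents {R : realType} (n : nat) (r t : R) : 0 <= r -> 0 <= t ->
  r `^ (n%:R / 2) * t `^ ((n%:R + 2) / 2) = t * Num.sqrt (r * t) ^+ n.
Proof.
move=> r_ge0 t_ge0.
rewrite -powR12_sqrt ?mulr_ge0 // -powR_mulrn ?powR_ge0 // -powRrM powRM //.
have -> : (n%:R + 2) / 2 = 2^-1 * n%:R + 1 :> R by field.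
rewrite powRD; last by apply/implyP; rewrite gt_eqF // ltr_wpDl ?mulr_ge0.
by rewrite powRr1 // (mulrC n%:R); ring.
Qed.

Theorem lemma4p3 (R : realType) (d : nat) (A : 'rV[R]_d -> set 'rV[R]_d)
  (p : nat) (sigma theta : R)
  (lambda : nat -> R) (y v x : nat -> 'rV[R]_d) (eps : nat -> R) :
  maximal_monotone A ->
  zeros A !=set0 ->
  (1 <= p)%N ->
  0 < sigma < 1 ->
  0 < theta ->
  ~ zeros A (x 0%N) ->
  (forall k, (1 <= k)%N -> 0 < lambda k) ->
  (forall k, (1 <= k)%N -> 0 <= eps k) ->
  (forall k : nat,
      enlarg A (eps k.+1) (y k.+1) (v k.+1) /\
      nrm (lambda k.+1 *: v k.+1 + y k.+1 - x k) ^+ 2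
        + 2 * lambda k.+1 * eps k.+1
        <= sigma ^+ 2 * nrm (y k.+1 - x k) ^+ 2 /\
      theta <= lambda k.+1 * nrm (y k.+1 - x k) ^+ (p - 1) /\
      x k.+1 = x k - lambda k.+1 *: v k.+1) ->
  forall k : nat, (1 <= k)%N ->
    \sum_(1 <= i < k.+1) lambda i >=
    theta * ((1 - sigma ^+ 2) /
              inf [set nrm (x 0%N - z) ^+ 2 | z in zeros A])
            `^ ((p%:R - 1) / 2)
          * k%:R `^ ((p%:R + 1) / 2).
Proof.
move=> _ zerosA p_ge1 /andP[sigma_gt0 sigma_lt1] theta_gt0 _ lambda_gt0 _ H k _.
set D := inf _; set S := \sum_(i < k) nrm (y i.+1 - x i) ^+ 2.
have sum_le : (1 - sigma ^+ 2) * S <= D.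
  apply: (@sum_step_sqr_le_inf _ _ A sigma lambda eps y v x) => // j.
  - exact: ltW (lambda_gt0 j.+1 isT).
  - by have [] := H j.
  - by have [_ []] := H j.
  - by have [_ [_ []]] := H j.
have gap_gt0 : 0 < 1 - sigma ^+ 2 by nra.
have S_ge0 : 0 <= S by apply: sumr_ge0 => i _; apply: sqr_ge0.
have D_ge0 : 0 <= D by nra.
have r_ge0 : 0 <= (1 - sigma ^+ 2) / D by rewrite divr_ge0 // ltW.
(* When D = 0 the base (1 - sigma^2) / D is 0, since x / 0 = 0. *)
have rS_le1 : (1 - sigma ^+ 2) / D * S <= 1.
  have [->|D_neq0] := eqVneq D 0; first by rewrite invr0 mulr0 mul0r ler01.
  by rewrite mulrAC ler_pdivrMr ?mul1r // lt_neqAle eq_sym D_neq0.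
case: p p_ge1 H => // n _ H.
rewrite big_add1 big_mkord /= -natr1 addrK -addrA (_ : 1 + 1 = 2) //.
rewrite -mulrA powR_half_exponents //.
apply: (sum_ge_of_sum_sqr_le k n theta _ (fun i => lambda i.+1)
          (fun i => nrm (y i.+1 - x i)) theta_gt0 r_ge0 _ _ rS_le1) => i.
- exact: sqrtr_ge0.
- by have [_ [_ []]] := H i; rewrite subn1.
Qed.
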